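(* Let $\mathcal{F}=(M,\{A^u\}_{u\in Q})$ be an FDFA and let $\underline{B}$ and $\overline{B}$ be the Büchi automata constructed from $\mathcal{F}$ as described in the context. Let $n$ be the number of states of the leading automaton $M$ and $k$ the number of states of the largest progress automaton of $\mathcal{F}$. Then the number of states of $\underline{B}$ is in $\mathcal{O}(n^2k^3)$ and the number of states of $\overline{B}$ is in $\mathcal{O}(n^2k^2)$. Moreover, $UP(L(\underline{B}))\subseteq UP(\mathcal{F})\subseteq UP(L(\overline{B}))$, and $UP(L(\underline{B}))=UP(\mathcal{F})$ when $\mathcal{F}$ is a canonical FDFA (the periodic, syntactic or recurrent FDFA of some $\omega$-regular language).
   Context: $\Sigma$ is a finite alphabet. For a complete DFA $A$ and finite word $w$, $A(w)$ is the state reached from the initial state on $w$. An FDFA is $\mathcal{F}=(M,\{A^q\}_{q\in Q})$ with $M=(\Sigma,Q,q_0,\delta)$ a complete DFA without accepting states and each $A^q=(\Sigma,Q_q,s_q,F_q,\delta_q)$ a complete DFA. $(u,v)$ with $u,v\in\Sigma^*$ is accepted by $\mathcal{F}$ iff $M(uv)=M(u)$ and $v\in L(A^{M(u)})$; $UP(\mathcal{F})=\{uv^\omega: v\neq\epsilon,\ (u,v)\text{ accepted}\}$. For an $\omega$-language $L'$, $UP(L')$ is the set of ultimately periodic words in $L'$. Construction: for a DFA $D$ and states $s,t$, $D^s_t$ is $D$ with initial state $s$ and accepting set $\{t\}$. For $u\in Q$, $v\in F_u$ let $\underline{P}_{(u,v)}=M^u_u\times(A^u)^{s_u}_v\times(A^u)^v_v$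 and $\overline{P}_{(u,v)}=M^u_u\times(A^u)^{s_u}_v$ (synchronous products, each with a single accepting state). From such a product $P=(\Sigma,Q_P,s_P,\{f_P\},\delta_P)$ form the Büchi automaton with $\epsilon$-transitions $(\Sigma,Q_P\cup\{f\},s_P,\{f\},\delta_P\cup\{(f,\epsilon,s_P),(f_P,\epsilon,f)\})$ with $f$ fresh. $\underline{B}$ (resp. $\overline{B}$) has state set $Q$ together with disjoint copies of these automata built from $\underline{P}_{(u,v)}$ (resp. $\overline{P}_{(u,v)}$) for all $u\in Q,v\in F_u$; initial state $q_0$; accepting states the fresh states $f$ of all components; transitions $\delta$, the transitions of all components, and $\epsilon$-transitions $(u,\epsilon,s_P)$ from $u\in Q$ to the initial state of the component for $(u,v)$. An infinite word is accepted if it has a run (with $\epsilon$-moves) reading it that visits accepting states infinitely often. Canonical FDFAs of an $\omega$-regular $L$: $x\sim_L y$ iff $\forall w\in\Sigma^\omega$, $xw\in L\Leftrightarrow yw\in L$. Leading automaton: states the classes of $\sim_L$, initial $[\epsilon]$, $[x]\xrightarrow{a}[xa]$. For each state with representative $u$: $x\approx^u_P y$ iff $\forall v$: $u(xv)^\omega\in L\Leftrightarrow u(yv)^\omega\in L$; $x\approx^u_S y$ iff $ux\sim_L uy$ and $\forall v$: $uxv\sim_L u\Rightarrow(u(xv)^\omega\in L\Leftrightarrow u(yv)^\omega\in L)$; $x\approx^u_R y$ iff $\forall v$: $(uxv\sim_L u\wedge u(xv)^\omega\in L)\Leftrightarrow(uyv\sim_L u\wedge u(yv)^\omega\in L)$.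 For $K\in\{P,S,R\}$ the progress automaton $A^u$ has states the classes of $\approx^u_K$, initial $[\epsilon]$, $[x]\xrightarrow{a}[xa]$, and accepting states the classes $[v]$ with $uv^\omega\in L$ ($K=P$), resp. with $uv\sim_L u$ and $uv^\omega\in L$ ($K=S,R$); these are the periodic, syntactic and recurrent FDFAs of $L$. *)

From mathcomp Require Import all_boot.
Set Implicit Arguments. Unset Strict Implicit. Unset Printing Implicit Defensive.

Section Words.
Variable S : finType.

(** Ultimately periodic word u (a::v)^omega (the period a::v is nonempty). *)
Definition lasso (u : seq S) (a : S) (v : seq S) : nat -> S :=
  let p := a :: v in
  fun i => if i < size u then nth a u i else nth a p ((i - size u) %% size p).

Definition prepend (x : seq S) (w : nat -> S) : nat -> S :=
  fun i => if i < size x then nth (w 0) x i else w (i - size x).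

Definition is_up (w : nat -> S) : Prop :=
  exists u a v, forall i, w i = lasso u a v i.

Definition UP (L : (nat -> S) -> Prop) : (nat -> S) -> Prop :=
  fun w => L w /\ is_up w.

(** "u v^omega \in L", false by convention when v is empty *)
Definition upin (L : (nat -> S) -> Prop) (u v : seq S) : Prop :=
  match v with [::] => False | a :: v' => L (lasso u a v') end.

Record nba := NBA {
  nst : finType; ninit : nst; ntrans : nst -> S -> nst -> bool; nacc : {set nst} }.

Definition nba_accepts (A : nba) (w : nat -> S) : Prop :=
  exists r : nat -> nst A, r 0 = ninit A /\
    (forall i, ntrans (r i) (w i) (r i.+1)) /\
    (forall i, exists i', i <= i' /\ r i' \in nacc A).

Definition omega_regular (L : (nat -> S) -> Prop) : Prop :=
  exists A : nba, forall w, L w <-> nba_accepts A w.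

(** Buechi automata with epsilon transitions (None = epsilon). *)
Record eba := EBA {
  est : finType; einit : est; etrans : est -> option S -> est -> bool;
  eacc : {set est} }.

(** A run reading w: the non-epsilon labels, in order, are exactly w. *)
Definition eba_accepts (B : eba) (w : nat -> S) : Prop :=
  exists (r : nat -> est B) (l : nat -> option S) (pos : nat -> nat),
    r 0 = einit B /\
    (forall i, etrans (r i) (l i) (r i.+1)) /\
    (forall j, pos j < pos j.+1) /\
    (forall j, l (pos j) = Some (w j)) /\
    (forall i, (forall j, pos j <> i) -> l i = None) /\
    (forall i, exists i', i <= i' /\ r i' \in eacc B).

(** Families of DFAs: M has no accepting states; progress DFAs A^q. *)
Record fdfa := FDFA {
  lq : finType; l0 : lq; ld : lq -> S -> lq;
  pq : lq -> finType; ps : forall q, pq q; pd : forall q, pq q -> S -> pq q;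
  pF : forall q, {set pq q} }.

Variable F : fdfa.

Definition Mrun (x : seq S) : lq F := foldl (fun q a => ld q a) (l0 F) x.
Definition Arun (q : lq F) (x : seq S) : @pq F q := foldl (fun p a => pd p a) (ps q) x.

Definition fdfa_acc (u v : seq S) : bool :=
  (Mrun (u ++ v) == Mrun u) && (Arun (Mrun u) v \in @pF F (Mrun u)).

Definition UP_fdfa : (nat -> S) -> Prop :=
  fun w => exists u a v, fdfa_acc u (a :: v) /\ forall i, w i = lasso u a v i.

Definition comp : finType := {x : {u : lq F & @pq F u} | tagged x \in @pF F (tag x)}.
Definition ctag (c : comp) : lq F := tag (val c).
Definition cv (c : comp) : @pq F (ctag c) := tagged (val c).

(** Generic construction of B from a family of products P_c (each with
    initial state, transition function and single accepting state). *)
Section Build.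
Variable P : comp -> finType.
Variable pinit : forall c, P c.
Variable pstep : forall c, P c -> S -> P c.
Variable pfin : forall c, P c.

Definition bstate : finType := (lq F + {c : comp & option (P c)})%type.

(* inr (c, None) is the fresh state f of component c *)
Definition btrans (s : bstate) (o : option S) (t : bstate) : bool :=
  match s, o with
  | inl q, Some a => t == inl (ld q a)
  | inl q, None =>
      [exists c : comp, (ctag c == q) && (t == inr (Tagged _ (Some (pinit c))))]
  | inr (existT c (Some p)), Some a => t == inr (Tagged _ (Some (pstep p a)))
  | inr (existT c (Some p)), None =>
      (p == pfin c) && (t == inr (Tagged (fun c => option (P c)) (None : option (P c))))
  | inr (existT c None), None => t == inr (Tagged _ (Some (pinit c)))
  | inr (existT c None), Some _ => false
  end.

Definition bacc : {set bstate} :=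
  [set s : bstate | if s is inr (existT _ None) then true else false].

Definition build : eba := @EBA bstate (inl (l0 F)) btrans bacc.
End Build.

(** underline P_(u,v) = M^u_u x (A^u)^{s_u}_v x (A^u)^v_v *)
Definition uP (c : comp) : finType := (lq F * @pq F (ctag c) * @pq F (ctag c))%type.
Definition uinit (c : comp) : uP c := (ctag c, @ps F (ctag c), cv c).
Definition ustep (c : comp) (p : uP c) (a : S) : uP c :=
  (ld p.1.1 a, pd p.1.2 a, pd p.2 a).
Definition ufin (c : comp) : uP c := (ctag c, cv c, cv c).
Definition underB : eba := @build uP uinit ustep ufin.

(** overline P_(u,v) = M^u_u x (A^u)^{s_u}_v *)
Definition oP (c : comp) : finType := (lq F * @pq F (ctag c))%type.
Definition oinit (c : comp) : oP c := (ctag c, @ps F (ctag c)).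
Definition ostep (c : comp) (p : oP c) (a : S) : oP c := (ld p.1 a, pd p.2 a).
Definition ofin (c : comp) : oP c := (ctag c, cv c).
Definition overB : eba := @build oP oinit ostep ofin.

Definition nM : nat := #|lq F|.
Definition kmax : nat := \max_(q : lq F) #|@pq F q|.

End Words.

Section Canonical.
Variable S : finType.
Variable L : (nat -> S) -> Prop.

Definition simL (x y : seq S) : Prop :=
  forall w, L (prepend x w) <-> L (prepend y w).

Definition approxP (u x y : seq S) : Prop :=
  forall v, upin L u (x ++ v) <-> upin L u (y ++ v).
Definition approxS (u x y : seq S) : Prop :=
  simL (u ++ x) (u ++ y) /\
  forall v, simL (u ++ x ++ v) u -> (upin L u (x ++ v) <-> upin L u (y ++ v)).
Definition approxR (u x y : seq S) : Prop :=
  forall v, (simL (u ++ x ++ v) u /\ upin L u (x ++ v)) <->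
            (simL (u ++ y ++ v) u /\ upin L u (y ++ v)).

Inductive fkind := Periodic | Syntactic | Recurrent.

Definition approx (K : fkind) : seq S -> seq S -> seq S -> Prop :=
  match K with Periodic => approxP | Syntactic => approxS | Recurrent => approxR end.

Definition accK (K : fkind) (u v : seq S) : Prop :=
  match K with
  | Periodic => upin L u v
  | _ => simL (u ++ v) u /\ upin L u v
  end.

(** F is (isomorphic to) the periodic / syntactic / recurrent FDFA of L:
    M's states are exactly the classes of ~_L (M(x) = M(y) iff x ~_L y, and
    every state is reached), and for every u, the progress DFA at M(u) has
    as states exactly the classes of the relation for u, with the
    prescribed accepting classes. *)
Definition is_canonical_fdfa (K : fkind) (F : fdfa S) : Prop :=
  (forall x y, Mrun F x = Mrun F y <-> simL x y) /\
  (forall q, exists x, Mrun F x = q) /\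
  (forall u : seq S,
     (forall x y, Arun (Mrun F u) x = Arun (Mrun F u) y <-> approx K u x y) /\
     (forall p, exists x, Arun (Mrun F u) x = p) /\
     (forall v, Arun (Mrun F u) v \in @pF S F (Mrun F u) <-> accK K u v)).
End Canonical.

From mathcomp Require Import all_boot zify.
From Stdlib Require Import FunctionalExtensionality.
Set Implicit Arguments. Unset Strict Implicit. Unset Printing Implicit Defensive.

(** The sizes are a count: besides the [n] states of [M], there is one component per
    pair [(u, v)] with [v] in [F_u], hence at most [n k] of them, each consisting of a
    product with [n k^2] (resp. [n k]) states and one fresh state.

    If [(u, v)] is accepted by [F], the component of [(M(u), A^{M(u)}(v))] in the
    overline automaton reads [v] in a loop, so it accepts [u v^omega].  The underline
    automaton does the same once [v] is replaced by a power [v^k] on which [A^{M(u)}] is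
    idempotent; for a canonical FDFA, [(u, v^k)] is still accepted because acceptance of
    [(u, v)] only depends on [u v^omega] and on whether [M(u v) = M(u)].

    Conversely, an accepting run of the underline automaton stays in one component [c]
    from some point on and visits its fresh state infinitely often.  Between two visits
    it reads a word [y] on which [M] loops at [u_c] and [A^{u_c}] moves from its initial
    state to [v_c] and from [v_c] to [v_c], so [(x, y)] is accepted by [F] whenever [x]
    is the prefix read at the first visit.  On an ultimately periodic word, two visits
    past the preperiod at a distance that is a multiple of the period give [x y^omega]. *)

(** * Repetitions and lassos *)

Definition rep (T : Type) (k : nat) (p : seq T) : seq T := flatten (nseq k p).

Section Rep.
Variable T : Type.
Implicit Types (p s : seq T) (k : nat).

Lemma size_rep k p : size (rep k p) = k * size p.
Proof. by elim: k => // k IH; rewrite /rep /= size_cat -/(rep k p) IH mulSn. Qed.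

Lemma repSr k p : rep k.+1 p = rep k p ++ p.
Proof. by rewrite /rep -addn1 nseqD flatten_cat /= cats0. Qed.

Lemma repD k1 k2 p : rep (k1 + k2) p = rep k1 p ++ rep k2 p.
Proof. by rewrite /rep nseqD flatten_cat. Qed.

Lemma nth_rep (d : T) k p i :
  i < k * size p -> nth d (rep k p) i = nth d p (i %% size p).
Proof.
elim: k i => [|k IH] i; first by rewrite mul0n.
rewrite mulSn /rep /= -/(rep k p) nth_cat => lt_i.
case: (ltnP i (size p)) => [lt_ip|le_pi]; first by rewrite modn_small.
rewrite IH; last by lia.
by rewrite -{2}(subnK le_pi) modnDr.
Qed.

Lemma foldl_rep (R : Type) (f : R -> T -> R) k p x :
  foldl f x (rep k p) = iter k (fun z => foldl f z p) x.
Proof. by elim: k => //= k IH; rewrite repSr foldl_cat IH. Qed.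

Lemma pmap_rep (U : Type) (f : T -> option U) k p :
  pmap f (rep k p) = rep k (pmap f p).
Proof. by elim: k => //= k IH; rewrite pmap_cat IH. Qed.

Lemma path_rep (e : rel T) x p s k :
  path e x (p ++ s) -> cycle e s -> path e x (p ++ rep k s).
Proof.
case: s => [|y s]; first by rewrite /rep; elim: k.
move=> + cyc; elim: k p => [|k IH] p; first by rewrite cats0 cat_path => /andP[].
move=> path_ps; rewrite /= catA; apply: IH.
by rewrite cat_path path_ps last_cat; move: cyc; rewrite (cycle_path y).
Qed.

End Rep.

Lemma take_mkseq (T : Type) (f : nat -> T) k n : take k (mkseq f n) = mkseq f (minn k n).
Proof. by rewrite /mkseq -map_take take_iota. Qed.

Lemma pmap_take (T U : Type) (f : T -> option U) n s :
  pmap f (take n s) = take (size (pmap f (take n s))) (pmap f s).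
Proof. by rewrite -{3}(cat_take_drop n s) pmap_cat take_size_cat. Qed.

Section Lasso.
Variable S : finType.
Implicit Types (u v : seq S) (a : S).

Lemma mkseq_lasso u a v m :
  mkseq (lasso u a v) (size u + m * size (a :: v)) = u ++ rep m (a :: v).
Proof.
apply: (@eq_from_nth _ a); first by rewrite size_mkseq size_cat size_rep.
move=> i; rewrite size_mkseq => lt_i; rewrite nth_mkseq // nth_cat /lasso.
case: ltnP => // le_ui; rewrite nth_rep //; lia.
Qed.

Lemma lasso_cycle u a v m j : j < size (a :: v) ->
  lasso u a v (size u + m * size (a :: v) + j) = nth a (a :: v) j.
Proof.
move=> lt_j; rewrite /lasso -addnA ltnNge leq_addr /= addKn.
by rewrite modnMDl modn_small.
Qed.

Lemma lasso_period u a v i d :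
  size u <= i -> size (a :: v) %| d -> lasso u a v (i + d) = lasso u a v i.
Proof.
move=> le_ui /dvdnP[e ->]; rewrite /lasso ltnNge (leq_trans le_ui (leq_addr _ _)).
by rewrite ltnNge le_ui /= -addnBAC // addnC modnMDl.
Qed.

Lemma lasso_of_periodic (w : nat -> S) N a v :
  mkseq w (N + size (a :: v)) = mkseq w N ++ a :: v ->
  (forall i, N <= i -> w (i + size (a :: v)) = w i) ->
  w =1 lasso (mkseq w N) a v.
Proof.
set p := a :: v => seg_p per_w i.
have per_wm m j : w (N + j + m * size p) = w (N + j).
  elim: m => [|m IH]; first by rewrite addn0.
  by rewrite mulSn addnCA addnC per_w // -addnA leq_addr.
rewrite /lasso size_mkseq; case: ltnP => [lt_iN|le_Ni]; first by rewrite nth_mkseq.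
have lt_mod : (i - N) %% size p < size p by rewrite ltn_mod.
have := congr1 (nth a ^~ (N + (i - N) %% size p)) seg_p.
rewrite nth_mkseq ?ltn_add2l // nth_cat size_mkseq ltnNge leq_addr /= addKn => <-.
by rewrite -(per_wm ((i - N) %/ size p)) -addnA [_ %% _ + _]addnC -divn_eq subnKC.
Qed.

Lemma lasso_rep u a v k a' v' :
  rep k (a :: v) = a' :: v' -> lasso u a' v' =1 lasso u a v.
Proof.
move=> rep_eq i; have u_eq : mkseq (lasso u a v) (size u) = u.
  by have := mkseq_lasso u a v 0; rewrite mul0n addn0 cats0.
rewrite -{1}u_eq -(lasso_of_periodic (N := size u)) //.
  by rewrite -rep_eq size_rep mkseq_lasso u_eq.
by move=> j le_uj; rewrite -rep_eq size_rep lasso_period // dvdn_mull.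
Qed.

End Lasso.

Lemma iter_idempotent (T : finType) (g : T -> T) x :
  exists2 k, 0 < k & iter (k + k) g x = iter k g x.
Proof.
suff from_loop i j : i < j -> iter i g x = iter j g x ->
    exists2 k, 0 < k & iter (k + k) g x = iter k g x.
  have /injectivePn[i [j ne_ij eq_ij]] : ~~ injectiveb (fun i : 'I_#|T|.+1 => iter i g x).
    by apply/injectiveP => /leq_card; rewrite card_ord ltnn.
  case: (ltngtP i j) => [lt_ij|lt_ji|/val_inj eq]; last by rewrite eq eqxx in ne_ij.
    exact: from_loop lt_ij eq_ij.
  exact: from_loop lt_ji (esym eq_ij).
move=> lt_ij eq_ij.
have step n : i <= n -> iter (n + (j - i)) g x = iter n g x.
  move=> le_in; rewrite -{1}(subnK le_in) -addnA (subnKC (ltnW lt_ij)).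
  by rewrite iterD -eq_ij -iterD subnK.
have periodic n m : i <= n -> iter (n + m * (j - i)) g x = iter n g x.
  move=> le_in; elim: m => [|m IH]; first by rewrite addn0.
  by rewrite mulSn addnCA addnC step // (leq_trans le_in (leq_addr _ _)).
exists (j * (j - i)); first by rewrite muln_gt0 subn_gt0 lt_ij (leq_ltn_trans _ lt_ij).
by rewrite periodic // (leq_trans (ltnW lt_ij)) // leq_pmulr // subn_gt0.
Qed.

Lemma unbounded_congr_pair (V : nat -> Prop) T m : 0 < m ->
  (forall n, exists2 N, n <= N & V N) ->
  exists N N', [/\ V N, V N', T <= N, N < N' & N = N' %[mod m]].
Proof.
move=> m_gt0 V_inf.
have [s [size_s uniq_s s_V]] : exists s, [/\ size s = m.+1, uniq s &
    forall N, N \in s -> V N /\ T <= N].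
  elim: m.+1 => [|K [s [size_s uniq_s s_V]]]; first by exists [::].
  have [N le_N VN] := V_inf (T + \max_(x <- s) x).+1.
  exists (N :: s); split; rewrite /= ?size_s //.
    rewrite uniq_s andbT; apply/negP => /(@leq_bigmax_seq _ _ predT id)/(_ isT) le_Nmax.
    by have := leq_ltn_trans le_Nmax (leq_ltn_trans (leq_addl _ _) le_N); rewrite ltnn.
  move=> x; rewrite inE => /predU1P[->|/s_V //]; split=> //.
  by apply: leq_trans (ltnW le_N); apply: leq_addr.
have : ~~ uniq [seq N %% m | N <- s].
  have mod_sub : {subset [seq N %% m | N <- s] <= iota 0 m}.
    by move=> _ /mapP[N _ ->]; rewrite mem_iota ltn_mod.
  by apply/negP => /uniq_leq_size/(_ mod_sub); rewrite size_map size_iota size_s ltnn.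
case/(uniqPn 0) => i [j [lt_ij]]; rewrite size_map => lt_j.
have lt_i := ltn_trans lt_ij lt_j.
rewrite !(nth_map 0) // => eq_mod.
have ne_ij : nth 0 s i != nth 0 s j by rewrite nth_uniq // neq_ltn lt_ij.
have [[Vi Ti] [Vj Tj]] := (s_V _ (mem_nth 0 lt_i), s_V _ (mem_nth 0 lt_j)).
case: (ltngtP (nth 0 s i) (nth 0 s j)) => [lt|lt|eq]; last by rewrite eq eqxx in ne_ij.
  by exists (nth 0 s i), (nth 0 s j).
by exists (nth 0 s j), (nth 0 s i).
Qed.

(** * Runs with epsilon-transitions *)

Section EpsilonRuns.
Variables (S : finType) (B : eba S).
Implicit Types (w : nat -> S) (r : nat -> est B) (l : nat -> option S).

Definition read_word l i : seq S := pmap id (mkseq l i).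

Lemma read_wordS l i : read_word l i.+1 = read_word l i ++ pmap id [:: l i].
Proof. by rewrite /read_word mkseqS -cats1 pmap_cat. Qed.

Lemma size_read_wordS l i : size (read_word l i.+1) = size (read_word l i) + isSome (l i).
Proof. by rewrite read_wordS size_cat; case: (l i). Qed.

Lemma size_read_word_mono l : {homo (fun i => size (read_word l i)) : i j / i <= j}.
Proof. by apply: homo_leq => [//|???|i]; [apply: leq_trans | rewrite size_read_wordS leq_addr]. Qed.

(* Equivalent to [eba_accepts] (see [eba_acceptsP]), with the letters of [w] located by
   counting the labels read so far instead of by their positions. *)
Definition reading_run w r l : Prop :=
  [/\ r 0 = einit B, (forall i, etrans (r i) (l i) (r i.+1)),
      (forall i, read_word l i = mkseq w (size (read_word l i))),
      (forall n, exists i, n <= size (read_word l i)) &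
      (forall i, exists2 j, i <= j & r j \in eacc B)].

Lemma reading_run_letter w r l i x :
  reading_run w r l -> l i = Some x -> x = w (size (read_word l i)).
Proof.
case=> _ _ read_w _ _ l_i; have := read_w i.+1.
rewrite read_wordS l_i /= size_cat addn1 mkseqS -cats1 [in LHS]read_w.
by move/eqP; rewrite eqseq_cat ?size_mkseq // => /andP[_ /eqP[]].
Qed.

Lemma reading_run_hit w r l j : reading_run w r l ->
  exists i, (size (read_word l i) == j) && isSome (l i).
Proof.
case=> _ _ _ /(_ j.+1)[i lt_j] _; elim: i lt_j => // i IH.
rewrite size_read_wordS; case: (ltnP j (size (read_word l i))) => [/IH //|le_ij lt_j].
exists i; case: (l i) lt_j => [x|] /=; rewrite ?addn1 ?addn0 => lt_j; last lia.
by rewrite andbT eqn_leq le_ij -ltnS.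
Qed.

Lemma read_word_letter_inj l i k : isSome (l i) -> isSome (l k) ->
  size (read_word l i) = size (read_word l k) -> i = k.
Proof.
have lt_size m n : isSome (l m) -> m < n -> size (read_word l m) < size (read_word l n).
  move=> l_m /(size_read_word_mono l); apply: leq_trans.
  by rewrite size_read_wordS l_m addn1.
move=> l_i l_k eq_size; case: (ltngtP i k) => // [/(lt_size _ _ l_i)|/(lt_size _ _ l_k)].
  by rewrite eq_size ltnn.
by rewrite eq_size ltnn.
Qed.

Lemma accepts_of_reading_run w r l : reading_run w r l -> eba_accepts B w.
Proof.
move=> run; pose pos (j : nat) : nat := xchoose (reading_run_hit j run).
have pos_hit j : size (read_word l (pos j)) = j /\ isSome (l (pos j)).
  by have /andP[/eqP] := xchooseP (reading_run_hit j run).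
have lt_pos j : pos j < pos j.+1.
  rewrite ltnNge; apply/negP => /(size_read_word_mono l).
  by rewrite (pos_hit j).1 (pos_hit j.+1).1 ltnn.
have pos_of i : isSome (l i) -> pos (size (read_word l i)) = i.
  move=> l_i; have [size_pos l_pos] := pos_hit (size (read_word l i)).
  exact: read_word_letter_inj l_pos l_i size_pos.
have [r0 r_trans _ _ r_acc] := run.
exists r, l, pos; split => //; split => //; split => //; split; [|split].
- move=> j; have [size_pos l_pos] := pos_hit j.
  case E: (l (pos j)) l_pos => [x|] // _.
  by rewrite (reading_run_letter run E) size_pos.
- move=> i not_pos; case E: (l i) => [x|] //.
  by case: (not_pos _ (pos_of i _)); rewrite E.
- by move=> i; have [j] := r_acc i; exists j.
Qed.

Lemma reading_run_of_accepts w : eba_accepts B w -> exists r l, reading_run w r l.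
Proof.
case=> r [l [pos [r0 [r_trans [lt_pos [l_pos [l_None r_acc]]]]]]].
have pos_le : {mono pos : i j / i <= j}.
  by apply: leq_mono; apply: homo_ltn lt_pos => ???; apply: ltn_trans.
have pos_inj : injective pos := incn_inj pos_le.
have read i : exists n, read_word l i = mkseq w n /\ forall j, (pos j < i) = (j < n).
  elim: i => [|i [n [read_i pos_lt]]]; first by exists 0.
  rewrite read_wordS read_i; case E: (l i) => [x|] /=.
  - have pos_n : pos n = i.
      apply/eqP; rewrite eqn_leq [i <= _]leqNgt pos_lt ltnn andbT leqNgt.
      apply/negP => lt_i; suff: l i = None by rewrite E.
      apply: l_None => j pos_j; case: (ltnP j n) => [|le_nj].
        by rewrite -pos_lt pos_j ltnn.
      by move: lt_i; rewrite ltnNge -pos_j pos_le le_nj.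
    exists n.+1; split.
      by rewrite mkseqS -cats1; have := l_pos n; rewrite pos_n E => -[->].
    move=> j; rewrite !ltnS [pos j <= i]leq_eqVlt [j <= n]leq_eqVlt pos_lt.
    by rewrite -pos_n (inj_eq pos_inj).
  - exists n; split; first by rewrite cats0.
    move=> j; rewrite ltnS leq_eqVlt pos_lt; case: eqP => // pos_j.
    by move: (l_pos j); rewrite pos_j E.
exists r, l; split => //.
- by move=> i; have [n [-> _]] := read i; rewrite size_mkseq.
- move=> n; exists (pos n).+1; have [m [-> pos_lt]] := read (pos n).+1.
  by rewrite size_mkseq ltnW // -pos_lt.
- by move=> i; have [j [? ?]] := r_acc i; exists j.
Qed.

Lemma eq_eba_accepts w w' : w =1 w' -> eba_accepts B w -> eba_accepts B w'.
Proof.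
move=> eq_w [r [l [pos [? [? [? [l_pos ?]]]]]]]; exists r, l, pos.
by do 3 split=> //; split=> // j; rewrite l_pos eq_w.
Qed.

Lemma eba_acceptsP w : eba_accepts B w <-> exists r l, reading_run w r l.
Proof. by split=> [/reading_run_of_accepts | [r [l /accepts_of_reading_run]]]. Qed.

(* A step is a label together with the state it leads to. *)
Definition step_rel : rel (option S * est B) := fun x y => etrans x.2 y.1 y.2.

Lemma lasso_accepted (P1 P2 : seq (option S * est B)) u a v :
  path step_rel (None, einit B) (P1 ++ P2) -> cycle step_rel P2 ->
  has (fun x => x.2 \in eacc B) P2 ->
  pmap fst P1 = u -> pmap fst P2 = a :: v -> eba_accepts B (lasso u a v).
Proof.
case: P2 => [|e P2] path12 cyc acc2 <- // word2.
set Q := (None, einit B) :: P1; set p := e :: P2.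
pose z := lasso Q e P2.
have long m : m <= m * size p by rewrite leq_pmulr.
have z_unroll m : mkseq z (size Q + m * size p) = Q ++ rep m p := mkseq_lasso Q e P2 m.
have z_nth m i : i < size Q + m * size p -> z i = nth e (Q ++ rep m p) i.
  by move=> lt_i; rewrite -z_unroll nth_mkseq.
have read_z i : read_word (fun j => (z j.+1).1) i = pmap fst (mkseq z i.+1).
  elim: i => [|i IH]; first by rewrite /read_word /z /lasso.
  by rewrite read_wordS IH [mkseq z i.+2]mkseqS -cats1 pmap_cat.
apply: (@accepts_of_reading_run _ (fun i => (z i).2) (fun i => (z i.+1).1)); split => //.
- move=> i; have lt_i : i.+1 < size Q + i.+1 * size p by have := long i.+1; rewrite /=; lia.
  have /(pathP e)/(_ i) := path_rep i.+1 path12 cyc.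
  rewrite (z_nth _ _ lt_i) (z_nth _ _ (ltnW lt_i)) size_cat size_rep.
  by apply; move: lt_i; rewrite /=; lia.
- move=> i; rewrite read_z.
  have -> : mkseq z i.+1 = take i.+1 (Q ++ rep i.+1 p).
    by rewrite -z_unroll take_mkseq; congr mkseq; apply/esym/minn_idPl; have := long i.+1; lia.
  by rewrite pmap_take pmap_cat pmap_rep word2 -mkseq_lasso take_mkseq size_mkseq.
- move=> n; exists (size P1 + n * size p).
  rewrite read_z -addSn z_unroll pmap_cat pmap_rep word2 size_cat size_rep.
  by apply: leq_trans (leq_addl _ _); rewrite leq_pmulr.
- move=> i; have [j lt_j acc_j] := has_nthP e acc2.
  exists (size Q + i * size p + j); last by rewrite /= /z (lasso_cycle Q i lt_j).
  by have := long i; lia.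
Qed.

Section DeterministicSteps.
Variables (T : Type) (g : T -> est B) (f : T -> S -> T).

Fixpoint det_steps t y : seq (option S * est B) :=
  if y is a :: y' then (Some a, g (f t a)) :: det_steps (f t a) y' else [::].

Lemma det_steps_word t y : pmap fst (det_steps t y) = y.
Proof. by elim: y t => //= a y IH t; rewrite IH. Qed.

Lemma det_steps_cat_path o t y p :
  (forall t a, etrans (g t) (Some a) (g (f t a))) ->
  path step_rel (o, g t) (det_steps t y ++ p) = path step_rel (None, g (foldl f t y)) p.
Proof.
move=> g_step; elim: y o t => [|a y IH] o t /=; first by case: p.
by rewrite IH {1}/step_rel /= g_step.
Qed.

End DeterministicSteps.

End EpsilonRuns.

(** * The Buchi automata built from a family of products *)

Lemma card_comp_le (S : finType) (F : fdfa S) : #|comp F| <= nM F * kmax F.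
Proof.
apply: leq_trans (_ : #|{: {q : lq F & pq q}}| <= _).
  exact: (leq_card _ val_inj).
rewrite card_tagged sumnE big_map big_enum /= /nM -sum_nat_const.
by apply: leq_sum => q _; apply: (leq_bigmax (F := fun q => #|pq q|)).
Qed.

Section BuildRuns.
Variables (S : finType) (F : fdfa S) (P : comp F -> finType).
Variables (pinit : forall c, P c) (pstep : forall c, P c -> S -> P c) (pfin : forall c, P c).

Local Notation B := (build pinit pstep pfin).

Definition bfresh (c : comp F) : bstate P :=
  inr (Tagged (fun c => option (P c)) (None : option (P c))).
Definition bprod (c : comp F) (p : P c) : bstate P :=
  inr (Tagged (fun c => option (P c)) (Some p)).

Lemma bfresh_inj : injective bfresh.
Proof. by move=> c c' /(congr1 (fun s : bstate P => if s is inr x then tag x else c)). Qed.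

Definition prod_accepts (c : comp F) (y : seq S) : Prop :=
  foldl (@pstep c) (pinit c) y = pfin c.

Lemma build_lasso_accepted c u a v :
  Mrun F u = ctag c -> prod_accepts c (a :: v) -> eba_accepts B (lasso u a v).
Proof.
move=> Mu acc_av.
pose P2 := det_steps (B := B) (@bprod c) (@pstep c) (pinit c) (a :: v) ++
             [:: (None, bfresh c); (None, bprod (pinit c))].
have path2 o : path (@step_rel _ B) (o, bprod (pinit c)) P2.
  rewrite det_steps_cat_path => [|t b]; last exact: eqxx.
  by rewrite acc_av /= !eqxx.
apply: (lasso_accepted (B := B) (P2 := P2)
  (P1 := det_steps (B := B) inl (@ld _ F) (l0 F) u ++ [:: (None, bprod (pinit c))])).
- rewrite -catA det_steps_cat_path => [|t b]; last exact: eqxx.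
  apply/andP; split; last exact: path2.
  by apply/existsP; exists c; rewrite -Mu !eqxx.
- rewrite (cycle_path (None, bfresh c)).
  have -> : last (None, bfresh c) P2 = (None, bprod (pinit c)) by rewrite /P2 last_cat.
  exact: path2.
- by apply/hasP; exists (None, bfresh c); rewrite ?inE // mem_cat !inE eqxx !orbT.
- by rewrite pmap_cat det_steps_word cats0.
- by rewrite pmap_cat det_steps_word cats0.
Qed.

Lemma card_build_le b :
  (forall c, #|P c| <= b) -> #|est B| <= nM F + nM F * kmax F * b.+1.
Proof.
move=> le_b; rewrite /= card_sum leq_add2l card_tagged sumnE big_map big_enum /=.
apply: leq_trans (leq_mul (card_comp_le F) (leqnn b.+1)); rewrite -sum_nat_const.
by apply: leq_sum => c _; rewrite card_option ltnS.
Qed.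

Section AcceptingRuns.
Hypothesis prod_accepts_cat : forall c y1 y2,
  prod_accepts c y1 -> prod_accepts c y2 -> prod_accepts c (y1 ++ y2).
Hypothesis prod_accepts_loop : forall c y,
  prod_accepts c y -> foldl (@ld _ F) (ctag c) y = ctag c.

Variables (w : nat -> S) (r : nat -> bstate P) (l : nat -> option S).
Hypothesis run : reading_run (B := B) w r l.

Lemma build_run_inv i :
  r i = inl (Mrun F (read_word l i)) \/
  (exists c, r i = bfresh c /\ Mrun F (read_word l i) = ctag c) \/
  (exists c y1 y2 (p : P c), [/\ r i = bprod p, read_word l i = y1 ++ y2,
     Mrun F y1 = ctag c & p = foldl (@pstep c) (pinit c) y2]).
Proof.
have [r0 r_trans _ _ _] := run.
elim: i => [|i IH]; first by left; rewrite r0.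
have := r_trans i; rewrite read_wordS.
case: IH => [r_i | [[c [r_i Mx]] | [c [y1 [y2 [p [r_i x_eq My1 p_eq]]]]]]];
  rewrite r_i; case: (l i) => [a|] /= trans.
- by left; rewrite (eqP trans) /Mrun foldl_cat.
- have [c /andP[/eqP Mc /eqP r_i1]] := existsP trans.
  by right; right; exists c, (read_word l i), [::], (pinit c); rewrite cats0.
- by [].
- by right; right; exists c, (read_word l i), [::], (pinit c); rewrite cats0 (eqP trans).
- right; right; exists c, y1, (y2 ++ [:: a]), (pstep p a).
  by rewrite x_eq catA foldl_cat -p_eq (eqP trans).
- move: trans => /andP[/eqP p_fin /eqP r_i1]; right; left; exists c; split => //.
  rewrite cats0 x_eq /Mrun foldl_cat -/(Mrun F y1) My1 prod_accepts_loop //.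
  by rewrite /prod_accepts -p_eq.
Qed.

Lemma build_run_after i c j : i <= j -> r i = bfresh c ->
  exists2 y, read_word l j = read_word l i ++ y &
    (r j = bfresh c /\ (y = [::] \/ prod_accepts c y)) \/
    (exists y1 y2 (p : P c), [/\ r j = bprod p, y = y1 ++ y2,
       y1 = [::] \/ prod_accepts c y1 & p = foldl (@pstep c) (pinit c) y2]).
Proof.
have [_ r_trans _ _ _] := run.
move=> /subnKC <- r_i; elim: (j - i) => [|d [y read_y IH]].
  by exists [::]; rewrite addn0 ?cats0 //; left; split => //; left.
have := r_trans (i + d); rewrite addnS read_wordS read_y -catA.
case: IH => [[r_id y_acc] | [y1 [y2 [p [r_id y_eq y1_acc p_eq]]]]];
  rewrite r_id; case: (l (i + d)) => [a|] //= trans; eexists; try reflexivity.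
- by right; exists y, [::], (pinit c); rewrite cats0 (eqP trans).
- by right; exists y1, (y2 ++ [:: a]), (pstep p a); rewrite y_eq catA foldl_cat -p_eq (eqP trans).
- move: trans => /andP[/eqP p_fin /eqP r_i1]; left; split; rewrite ?cats0 //; right.
  have y2_acc : prod_accepts c y2 by rewrite /prod_accepts -p_eq.
  by rewrite y_eq; case: y1_acc => [->|y1_acc] //; apply: prod_accepts_cat.
Qed.

Lemma build_accepting_visits : exists c (V : nat -> Prop),
  [/\ forall N, V N -> Mrun F (mkseq w N) = ctag c,
       forall n, exists2 N, n <= N & V N &
       forall N N', V N -> V N' -> N < N' ->
         exists2 y, mkseq w N' = mkseq w N ++ y & prod_accepts c y].
Proof.
have [_ _ read_w reads r_acc] := run.
have [i1 _] := r_acc 0; case r_i1: (r i1) => [q|[c [p|]]]; rewrite inE //= => _.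
exists c, (fun N => exists2 i, r i = bfresh c & size (read_word l i) = N); split.
- move=> N [i r_i <-]; rewrite -read_w.
  case: (build_run_inv i) => [|[[c' []] | [c' [y1 [y2 [p []]]]]]]; rewrite r_i //.
  by move/bfresh_inj <-.
- move=> n; have [i0 n_i0] := reads n; have [j le_j acc_j] := r_acc (i1 + i0).
  have le_i1j : i1 <= j by apply: leq_trans le_j; apply: leq_addr.
  have [y _ [[r_j _] | [y1 [y2 [p [r_j _ _ _]]]]]] := build_run_after le_i1j r_i1;
    last by rewrite r_j inE in acc_j.
  exists (size (read_word l j)); last by exists j.
  by apply: leq_trans n_i0 (size_read_word_mono _ _); apply: leq_trans le_j; apply: leq_addl.
- move=> _ _ [i r_i <-] [i' r_i' <-] lt_ii'.
  have le_ii' : i <= i'.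
    by rewrite leqNgt; apply/negP => /ltnW /(size_read_word_mono l); rewrite leqNgt lt_ii'.
  have [y read_y [[_ [y0|y_acc]] | [y1 [y2 [p [r_i'' _ _ _]]]]]] := build_run_after le_ii' r_i.
  + by move: lt_ii'; rewrite read_y y0 cats0 ltnn.
  + by exists y => //; rewrite -!read_w.
  + by rewrite r_i' in r_i''.
Qed.

End AcceptingRuns.

End BuildRuns.

(** * The underline and overline automata *)

Lemma card_bound_arith n k b : 0 < k -> 0 < b -> n + n * k * b.+1 <= 3 * (n * k * b).
Proof.
move=> k_gt0 b_gt0.
have le_n : n <= n * k * b by rewrite -mulnA leq_pmulr // muln_gt0 k_gt0.
have le_nk : n * k <= n * k * b by rewrite leq_pmulr.
by rewrite mulnS; lia.
Qed.

Section FDFA.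
Variables (S : finType) (F : fdfa S).

Local Notation over_accepts := (prod_accepts (@oinit _ F) (@ostep _ F) (@ofin _ F)).
Local Notation under_accepts := (prod_accepts (@uinit _ F) (@ustep _ F) (@ufin _ F)).

Lemma Mrun_cat x y : Mrun F (x ++ y) = foldl (@ld _ F) (Mrun F x) y.
Proof. by rewrite /Mrun foldl_cat. Qed.

Lemma under_acceptsE c y : under_accepts c y <->
  [/\ foldl (@ld _ F) (ctag c) y = ctag c, Arun (ctag c) y = cv c &
      foldl (@pd _ F _) (cv c) y = cv c].
Proof.
rewrite /prod_accepts /ufin /uinit.
suff -> : forall x : uP c, foldl (@ustep _ F c) x y =
    (foldl (@ld _ F) x.1.1 y, foldl (@pd _ F _) x.1.2 y, foldl (@pd _ F _) x.2 y).
  by rewrite /Arun; split=> [[-> -> ->] | [-> -> ->]].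
by elim: y => [|a y IH] [[q p1] p2] //=; rewrite IH.
Qed.

Lemma over_acceptsE c y : over_accepts c y <->
  foldl (@ld _ F) (ctag c) y = ctag c /\ Arun (ctag c) y = cv c.
Proof.
rewrite /prod_accepts /ofin /oinit.
suff -> : forall x : oP c, foldl (@ostep _ F c) x y =
    (foldl (@ld _ F) x.1 y, foldl (@pd _ F _) x.2 y).
  by rewrite /Arun; split=> [[-> ->] | [-> ->]].
by elim: y => [|a y IH] [q p] //=; rewrite IH.
Qed.

Lemma under_accepts_cat c y1 y2 :
  under_accepts c y1 -> under_accepts c y2 -> under_accepts c (y1 ++ y2).
Proof.
move=> /under_acceptsE[M1 A1 v1] /under_acceptsE[M2 A2 v2].
by apply/under_acceptsE; rewrite /Arun !foldl_cat M1 M2 -/(Arun _ y1) A1 v1 v2.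
Qed.

Lemma under_accepts_loop c y : under_accepts c y -> foldl (@ld _ F) (ctag c) y = ctag c.
Proof. by case/under_acceptsE. Qed.

Lemma underB_UP_fdfa w : UP (eba_accepts (underB F)) w -> UP_fdfa F w.
Proof.
case=> /eba_acceptsP[r [l run]] [u0 [a0 [v0 w_lasso]]].
have [c [V [V_M V_inf V_pair]]] :=
  build_accepting_visits under_accepts_cat under_accepts_loop run.
have [N [N' [VN VN' le_u0N lt_NN' eq_mod]]] :=
  unbounded_congr_pair (size u0) (ltn0Sn (size v0)) V_inf.
have [[|a v] w_N' /under_acceptsE[y_M y_A _]] := V_pair N N' VN VN' lt_NN'.
  by move/(congr1 size): w_N'; rewrite cats0 !size_mkseq => eq_NN'; rewrite eq_NN' ltnn in lt_NN'.
have size_av : size (a :: v) = N' - N.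
  apply/eqP; rewrite -(eqn_add2l N) subnKC ?(ltnW lt_NN') //.
  by rewrite -(size_mkseq w N') w_N' size_cat size_mkseq.
exists (mkseq w N), a, v; split.
  by rewrite /fdfa_acc Mrun_cat (V_M N VN) y_M eqxx y_A (valP c).
apply: lasso_of_periodic => [|i le_Ni]; first by rewrite size_av subnKC // ltnW.
rewrite !w_lasso size_av lasso_period //; first exact: leq_trans le_u0N le_Ni.
by rewrite -eqn_mod_dvd ?(ltnW lt_NN') // eq_sym eq_mod.
Qed.

Definition acc_comp u y (acc : Arun (Mrun F u) y \in @pF _ F (Mrun F u)) : comp F :=
  exist _ (Tagged (@pq _ F) (Arun (Mrun F u) y)) acc.

Lemma UP_fdfa_overB w : UP_fdfa F w -> UP (eba_accepts (overB F)) w.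
Proof.
case=> u [a [v [/andP[/eqP M_loop A_acc] w_lasso]]]; split; last by exists u, a, v.
apply: eq_eba_accepts (fun i => esym (w_lasso i)) _.
have M_p : foldl (@ld _ F) (Mrun F u) (a :: v) = Mrun F u by rewrite -Mrun_cat.
apply: (build_lasso_accepted (c := acc_comp A_acc)) => //.
by apply/over_acceptsE; split; [exact: M_p |].
Qed.

Lemma underB_accepts_idem u a v : fdfa_acc F u (a :: v) ->
  Arun (Mrun F u) ((a :: v) ++ (a :: v)) = Arun (Mrun F u) (a :: v) ->
  eba_accepts (underB F) (lasso u a v).
Proof.
case/andP=> /eqP M_loop A_acc A_idem.
have M_p : foldl (@ld _ F) (Mrun F u) (a :: v) = Mrun F u by rewrite -Mrun_cat.
have A_p : foldl (@pd _ F _) (Arun (Mrun F u) (a :: v)) (a :: v) = Arun (Mrun F u) (a :: v).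
  by rewrite -[RHS]A_idem /Arun foldl_cat.
apply: (build_lasso_accepted (c := acc_comp A_acc)) => //.
by apply/under_acceptsE; split; [exact: M_p | | exact: A_p].
Qed.

Lemma canonical_fdfa_acc_rep L K u a v k a' v' : is_canonical_fdfa L K F ->
  rep k (a :: v) = a' :: v' -> fdfa_acc F u (a :: v) -> fdfa_acc F u (a' :: v').
Proof.
case=> M_sim [_ A_can] rep_eq /andP[/eqP M_loop A_acc].
have M_p : foldl (@ld _ F) (Mrun F u) (a :: v) = Mrun F u by rewrite -Mrun_cat.
have M_loop' : Mrun F (u ++ a' :: v') = Mrun F u.
  by rewrite -rep_eq Mrun_cat foldl_rep; elim: k {rep_eq} => // k IH; rewrite iterS IH.
have same_lasso : lasso u a' v' = lasso u a v.
  exact: functional_extensionality (lasso_rep u rep_eq).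
have [_ [_ acc_iff]] := A_can u.
rewrite /fdfa_acc M_loop' eqxx; apply/acc_iff; move/acc_iff: A_acc.
have sim_rep : simL L (u ++ a' :: v') u by apply/M_sim.
by case: K {A_can acc_iff} => /=; rewrite same_lasso // => -[].
Qed.

Lemma canonical_UP_fdfa_underB L K w :
  is_canonical_fdfa L K F -> UP_fdfa F w -> UP (eba_accepts (underB F)) w.
Proof.
move=> can [u [a [v [acc w_lasso]]]]; split; last by exists u, a, v.
have [k k_gt0 idem] := iter_idempotent (fun x => foldl (@pd _ F _) x (a :: v)) (ps (Mrun F u)).
case rep_eq : (rep k (a :: v)) => [|a' v'].
  by move: (size_rep k (a :: v)); rewrite rep_eq => /esym/eqP; rewrite muln_eq0 eqn0Ngt k_gt0.
apply: (eq_eba_accepts (w := lasso u a' v')) => [i|]; first by rewrite w_lasso (lasso_rep u rep_eq).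
apply: underB_accepts_idem; first exact: canonical_fdfa_acc_rep can rep_eq acc.
by rewrite /Arun -rep_eq -repD !foldl_rep idem.
Qed.

Lemma card_pq_le q : #|@pq _ F q| <= kmax F.
Proof. exact: (leq_bigmax (F := fun q => #|pq q|)). Qed.

Lemma nM_gt0 : 0 < nM F.
Proof. by apply/card_gt0P; exists (l0 F). Qed.

Lemma kmax_gt0 : 0 < kmax F.
Proof. by apply: leq_trans (card_pq_le (l0 F)); apply/card_gt0P; exists (ps (l0 F)). Qed.

Lemma underB_card : #|est (underB F)| <= 3 * nM F ^ 2 * kmax F ^ 3.
Proof.
pose b := nM F * kmax F * kmax F.
apply: leq_trans (card_build_le (@uinit _ F) (@ustep _ F) (@ufin _ F) (b := b) _) _.
  by move=> c; rewrite !card_prod !leq_mul ?card_pq_le.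
have -> : 3 * nM F ^ 2 * kmax F ^ 3 = 3 * (nM F * kmax F * b) by rewrite /b; nia.
by apply: card_bound_arith; rewrite ?muln_gt0 ?nM_gt0 ?kmax_gt0.
Qed.

Lemma overB_card : #|est (overB F)| <= 3 * nM F ^ 2 * kmax F ^ 2.
Proof.
pose b := nM F * kmax F.
apply: leq_trans (card_build_le (@oinit _ F) (@ostep _ F) (@ofin _ F) (b := b) _) _.
  by move=> c; rewrite !card_prod !leq_mul ?card_pq_le.
have -> : 3 * nM F ^ 2 * kmax F ^ 2 = 3 * (nM F * kmax F * b) by rewrite /b; nia.
by apply: card_bound_arith; rewrite ?muln_gt0 ?nM_gt0 ?kmax_gt0.
Qed.

End FDFA.

Theorem lemma3 :
  (exists c : nat, forall (S : finType) (F : fdfa S),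
      #|est (underB F)| <= c * (nM F) ^ 2 * (kmax F) ^ 3 /\
      #|est (overB F)| <= c * (nM F) ^ 2 * (kmax F) ^ 2) /\
  (forall (S : finType) (F : fdfa S) (w : nat -> S),
      (UP (eba_accepts (underB F)) w -> UP_fdfa F w) /\
      (UP_fdfa F w -> UP (eba_accepts (overB F)) w)) /\
  (forall (S : finType) (L : (nat -> S) -> Prop) (K : fkind) (F : fdfa S),
      omega_regular L -> is_canonical_fdfa L K F ->
      forall w, UP (eba_accepts (underB F)) w <-> UP_fdfa F w).
Proof.
split; first by exists 3 => S F; split; [exact: underB_card | exact: overB_card].
split=> [S F w | S L K F _ can w]; split; try exact: underB_UP_fdfa.
  exact: UP_fdfa_overB.
exact: canonical_UP_fdfa_underB can.
Qed.
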